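(* Let $R$ be a commutative Noetherian local ring. Let $\mathcal{P} \subset R$ be a finite subset and let $\mathcal{P}_0, \mathcal{P}_1, \ldots, \mathcal{P}_r$ be subsets of $\mathcal{P}$; set $c_\ell = \#\mathcal{P}_\ell$ for all $\ell$ and $I = (\mathcal{P})$. Assume: (Ba1) $\mathcal{P} = \mathcal{P}_0 \cup \mathcal{P}_1 \cup \cdots \cup \mathcal{P}_r$; (Ba2) $\#\mathcal{P}_0 = 1$; (Ba3) for each $\ell$ with $0 < \ell \le r$ and $c_\ell \ge 2$, there exists an integer $n_\ell$ with $2 \le n_\ell \le c_\ell$ such that for arbitrary $n_\ell$ distinct elements $p_1, \ldots, p_{n_\ell} \in \mathcal{P}_\ell$ there exist an integer $\ell'$ with $0 \le \ell' < \ell$ and elements $p' \in \mathcal{P}_{\ell'}$, $b \in I^{n_\ell - 1}$ such that $p_1 p_2 \cdots p_{n_\ell} = p' b$. For $0 \le \ell \le r$ with $c_\ell = 1$, set $n_\ell = 2$. For each $\ell = 0, 1, \ldots, r$, let $A^{(\ell)} = (a^{(\ell)}_{ij})$ be an $(n_\ell - 1) \times c_\ell$ matrix with entries in $R$ such that all maximal minors of $A^{(\ell)}$ are units in $R$. Write $\mathcal{P}_\ell = \{p^{(\ell)}_1, \ldots, p^{(\ell)}_{c_\ell}\}$, and set $$g^{(\ell)}_i = \sum_{j=1}^{c_\ell} a^{(\ell)}_{ij} p^{(\ell)}_j \quad (1 \le i \le n_\ell - 1,\ 0 \le \ell \le r), \qquad J = (g^{(\ell)}_i : 0 \le \ell \le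 r,\ 1 \le i \le n_\ell - 1).$$ Then $J$ is a reduction of $I$.
   Context: An ideal $J \subseteq I$ is called a reduction of $I$ if there exists an integer $s \ge 1$ such that $I^{s+1} = J I^s$. *)

From HB Require Import structures.
From mathcomp Require Import all_boot all_order all_algebra.
Set Implicit Arguments. Unset Strict Implicit. Unset Printing Implicit Defensive.
Import GRing.Theory.
Local Open Scope ring_scope.

Section Ideals.
Variable R : comUnitRingType.

Definition is_ideal (I : R -> Prop) : Prop :=
  I 0 /\ (forall x y, I x -> I y -> I (x + y)) /\ (forall a x, I x -> I (a * x)).

Definition ideal_gen (S : R -> Prop) (x : R) : Prop :=
  exists (k : nat) (c g : 'I_k -> R),
    (forall i, S (g i)) /\ x = \sum_(i < k) c i * g i.

Definition ideal_mul (I J : R -> Prop) : R -> Prop :=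
  ideal_gen (fun x => exists a b, I a /\ J b /\ x = a * b).

Fixpoint ideal_exp (I : R -> Prop) (n : nat) : R -> Prop :=
  match n with
  | 0 => ideal_gen (fun x => x = 1)
  | n.+1 => ideal_mul (ideal_exp I n) I
  end.

Definition is_reduction (J I : R -> Prop) : Prop :=
  (forall x, J x -> I x) /\
  exists s : nat, (1 <= s)%N /\
    forall x, ideal_exp I s.+1 x <-> ideal_mul J (ideal_exp I s) x.

Definition noetherian : Prop :=
  forall I : R -> Prop, is_ideal I ->
    exists s : seq R, forall x, I x <-> ideal_gen (fun y => y \in s) x.

Definition maximal_ideal (M : R -> Prop) : Prop :=
  is_ideal M /\ ~ M 1 /\
  forall N : R -> Prop, is_ideal N -> (forall x, M x -> N x) ->
    (forall x, N x <-> M x) \/ N 1.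

Definition local_ring : Prop :=
  exists M : R -> Prop, maximal_ideal M /\
    forall N, maximal_ideal N -> forall x, N x <-> M x.

(* all maximal minors (determinants of the square submatrices obtained by
   choosing m columns in increasing order) of an m x c matrix are units *)
Definition maxminors_units (m c : nat) (A : 'M[R]_(m, c)) : Prop :=
  forall f : 'I_m -> 'I_c, (forall i j : 'I_m, i < j -> f i < f j)%N ->
    \det (colsub f A) \is a GRing.unit.

End Ideals.

(* Call Q reducible if, for some K, every product of K + 1 elements of Q lies
   in J I^K; reducibility of P is exactly the claim, and it is preserved by
   finite unions, so one climbs the levels P_0, ..., P_r.  A level with a single
   element p has a unit 1 x 1 minor, so p is in J.  Otherwise, with n = n_l, a
   repeated factor in a product of n elements of P_l is eliminated by Cramer's
   rule on n - 1 columns of A^(l) covering all factors: it is traded for the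
   generators g of J and for factors not yet present.  Hence every such product
   lies in J I^(n-1) + P_(<l) I^(n-1) by (Ba3), and grouping a product of
   n(K+1) factors into K + 1 blocks shows that P_l is reducible with exponent
   n(K+1) - 1 when the lower levels are reducible with exponent K. *)

From HB Require Import structures.
From mathcomp Require Import all_boot all_order all_algebra zify.
Import GRing.Theory.
Local Open Scope ring_scope.
Set Implicit Arguments. Unset Strict Implicit.

Section IdealTheory.
Variable R : comUnitRingType.
Implicit Types (S T I J : R -> Prop) (x y : R).

Lemma idealD T x y : is_ideal T -> T x -> T y -> T (x + y).
Proof. by case=> _ [TD _]; apply: TD. Qed.

Lemma idealMl T a x : is_ideal T -> T x -> T (a * x).
Proof. by case=> _ [_ TM]; apply: TM. Qed.

Lemma idealMr T a x : is_ideal T -> T x -> T (x * a).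
Proof. by rewrite mulrC; apply: idealMl. Qed.

Lemma idealB T x y : is_ideal T -> T x -> T y -> T (x - y).
Proof. by move=> hT hx hy; rewrite -mulN1r; apply: idealD => //; apply: idealMl. Qed.

Lemma ideal_sum T (Ix : Type) (r : seq Ix) (P : pred Ix) (F : Ix -> R) :
  is_ideal T -> (forall i, P i -> T (F i)) -> T (\sum_(i <- r | P i) F i).
Proof. by move=> [T0 [TD _]] TF; apply: big_ind. Qed.

Lemma ideal_gen_mem S x : S x -> ideal_gen S x.
Proof.
by move=> Sx; exists 1%N, (fun _ => 1), (fun _ => x); rewrite big_ord1 mul1r.
Qed.

Lemma is_ideal_gen S : is_ideal (ideal_gen S).
Proof.
split.
  by exists 0%N, (fun _ => 0), (fun _ => 0); split=> [[] // | ]; rewrite big_ord0.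
split=> [_ _ [k1 [c1 [g1 [S1 ->]]]] [k2 [c2 [g2 [S2 ->]]]] | a _ [k [c [g [Sg ->]]]]].
  exists (k1 + k2)%N,
    (fun i => match split i with inl i1 => c1 i1 | inr i2 => c2 i2 end),
    (fun i => match split i with inl i1 => g1 i1 | inr i2 => g2 i2 end).
  split=> [i | ]; first by case: (split i).
  by rewrite big_split_ord; congr (_ + _); apply: eq_bigr => i _;
    [rewrite (unsplitK (inl i)) | rewrite (unsplitK (inr i))].
exists k, (fun i => a * c i), g; split=> //.
by rewrite big_distrr; apply: eq_bigr => i _; rewrite /= mulrA.
Qed.

Lemma ideal_gen_mulr S T a b : is_ideal T ->
  (forall x, S x -> T (x * b)) -> ideal_gen S a -> T (a * b).
Proof.
move=> hT Sb [k [c [g [Sg ->]]]]; rewrite mulr_suml.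
by apply: ideal_sum => // i _; rewrite -mulrA; apply: idealMl => //; apply: Sb.
Qed.

Lemma ideal_gen_min S T x : is_ideal T -> (forall y, S y -> T y) ->
  ideal_gen S x -> T x.
Proof.
move=> hT ST [k [c [g [Sg ->]]]].
by apply: ideal_sum => // i _; apply: idealMl => //; apply: ST.
Qed.

Lemma ideal_gen_mul S1 S2 S3 a b : ideal_gen S1 a -> ideal_gen S2 b ->
  (forall x y, S1 x -> S2 y -> ideal_gen S3 (x * y)) -> ideal_gen S3 (a * b).
Proof.
move=> ha hb S12; apply: (ideal_gen_mulr (is_ideal_gen S3)) ha => x S1x.
rewrite mulrC; apply: (ideal_gen_mulr (is_ideal_gen S3)) hb => y S2y.
by rewrite mulrC; apply: S12.
Qed.

Lemma ideal_mul_mem I J a b : I a -> J b -> ideal_mul I J (a * b).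
Proof. by move=> ha hb; apply: ideal_gen_mem; exists a, b. Qed.

Lemma ideal_mul_min I J T x : is_ideal T ->
  (forall a b, I a -> J b -> T (a * b)) -> ideal_mul I J x -> T x.
Proof.
by move=> hT IJT; apply: ideal_gen_min => // _ [a [b [ha [hb ->]]]]; apply: IJT.
Qed.

Lemma is_ideal_exp I k : is_ideal (ideal_exp I k).
Proof. by case: k => [|k]; apply: is_ideal_gen. Qed.

Lemma ideal_exp0 I x : ideal_exp I 0 x.
Proof.
by rewrite -[x]mulr1; apply: idealMl; [apply: is_ideal_gen | apply: ideal_gen_mem].
Qed.

Lemma ideal_exp1 I x : I x -> ideal_exp I 1 x.
Proof. by move=> hx; rewrite -[x]mul1r; apply: ideal_mul_mem hx; apply: ideal_exp0. Qed.

Lemma ideal_expD I a b x y :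
  ideal_exp I a x -> ideal_exp I b y -> ideal_exp I (a + b) (x * y).
Proof.
move=> hx; elim: b y => [|b IH] y hy.
  by rewrite addn0; apply: idealMr hx; apply: is_ideal_exp.
rewrite addnS mulrC; apply: (ideal_gen_mulr (is_ideal_exp _ _)) hy.
move=> _ [u [v [hu [hv ->]]]].
by rewrite /= mulrC mulrA; apply: ideal_mul_mem hv; apply: IH.
Qed.

Lemma ideal_exp_prod I s : (forall x, x \in s -> I x) ->
  ideal_exp I (size s) (\prod_(x <- s) x).
Proof.
elim: s => [|y s IH] sI; first exact: ideal_exp0.
rewrite big_cons (_ : size _ = 1 + size s)%N //; apply: ideal_expD.
  by apply: ideal_exp1; apply: sI; apply: mem_head.
by apply: IH => x xs; apply: sI; rewrite inE xs orbT.
Qed.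

Lemma ideal_exp_gen_prod (Q : pred R) k x :
  ideal_exp (ideal_gen (fun y => Q y)) k x ->
  ideal_gen (fun y => exists s, [/\ size s = k, all Q s & y = \prod_(z <- s) z]) x.
Proof.
elim: k x => [|k IH] x /=.
  apply: ideal_gen_min; first exact: is_ideal_gen.
  by move=> _ ->; apply: ideal_gen_mem; exists [::]; rewrite big_nil.
apply: ideal_mul_min; first exact: is_ideal_gen.
move=> a b /IH ha hb; apply: (ideal_gen_mul ha hb) => _ v [s [hs Qs ->]] Qv.
apply: ideal_gen_mem; exists (v :: s).
by rewrite /= hs Qv Qs big_cons mulrC.
Qed.

End IdealTheory.

Section Reducibility.
Variable R : comUnitRingType.
Variables I J : R -> Prop.
Hypothesis J_sub_I : forall x, J x -> I x.

Definition JI a := ideal_mul J (ideal_exp I a).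

Lemma JI_mul_exp a b x y : JI a x -> ideal_exp I b y -> JI (a + b) (x * y).
Proof.
move=> hx hy; apply: (ideal_gen_mulr (is_ideal_gen _)) hx.
move=> _ [u [v [hu [hv ->]]]].
by rewrite -mulrA; apply: ideal_mul_mem hu _; apply: ideal_expD.
Qed.

Lemma JI_sub_exp a x : JI a x -> ideal_exp I a.+1 x.
Proof.
apply: ideal_mul_min; first exact: is_ideal_exp.
by move=> u v hu hv; rewrite mulrC; apply: ideal_mul_mem hv _; apply: J_sub_I.
Qed.

Definition reducing_exponent (Q : pred R) K :=
  forall s, size s = K.+1 -> all Q s -> JI K (\prod_(x <- s) x).

Definition reducible (Q : pred R) := exists K, reducing_exponent Q K.

Lemma reducing_exponent_leq (Q : pred R) K K' : (forall x, Q x -> I x) ->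
  reducing_exponent Q K -> (K <= K')%N -> reducing_exponent Q K'.
Proof.
move=> QI hK leKK' s hs Qs.
have /andP [Qs1 Qs2] : all Q (take K.+1 s) && all Q (drop K.+1 s).
  by rewrite -all_cat cat_take_drop.
rewrite -(cat_take_drop K.+1 s) big_cat -(subnKC leKK').
apply: JI_mul_exp; first by apply: (hK _ _ Qs1); rewrite size_takel // hs ltnS.
rewrite (_ : K' - K = size (drop K.+1 s))%N; last by rewrite size_drop hs subSS.
by apply: ideal_exp_prod => x /(allP Qs2); apply: QI.
Qed.

Lemma reducible_sub (Q1 Q2 : pred R) :
  (forall x, Q1 x -> Q2 x) -> reducible Q2 -> reducible Q1.
Proof.
move=> Q12 [K hK]; exists K => s hs Qs; apply: hK => //.
by apply/allP => x /(allP Qs); apply: Q12.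
Qed.

Lemma reducibleU (Q1 Q2 : pred R) : (forall x, Q1 x -> I x) ->
  (forall x, Q2 x -> I x) -> reducible Q1 -> reducible Q2 -> reducible (predU Q1 Q2).
Proof.
move=> Q1I Q2I [K1 h1] [K2 h2]; exists (K1 + K2)%N => s hs Qs.
have sI x : x \in s -> I x by move=> /(allP Qs) /orP [/Q1I | /Q2I].
rewrite -(perm_big _ (permEl (perm_filterC Q1 s))) big_cat /=.
set s1 := filter Q1 s; set s2 := filter (predC Q1) s.
have s1s : {subset s1 <= s} by apply/mem_subseq/filter_subseq.
have s2s : {subset s2 <= s} by apply/mem_subseq/filter_subseq.
have Q1s1 : all Q1 s1 by apply: filter_all.
have Q2s2 : all Q2 s2.
  apply/allP => x; rewrite mem_filter => /andP [/negbTE nQ1x /(allP Qs)].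
  by rewrite /= nQ1x.
have size_s12 : (size s1 + size s2 = (K1 + K2).+1)%N.
  by rewrite !size_filter count_predC.
(* A product of K1 + K2 + 1 factors has either K1 + 1 factors from Q1 or K2 + 1
   factors from Q2. *)
case: (leqP K1.+1 (size s1)) => size_s1.
  rewrite (_ : K1 + K2 = (size s1).-1 + size s2)%N; last by lia.
  apply: JI_mul_exp; last by apply: ideal_exp_prod => x /s2s /sI.
  by apply: (reducing_exponent_leq Q1I h1); rewrite ?prednK //; lia.
rewrite mulrC (_ : K1 + K2 = (size s2).-1 + size s1)%N; last by lia.
apply: JI_mul_exp; last by apply: ideal_exp_prod => x /s1s /sI.
by apply: (reducing_exponent_leq Q2I h2); rewrite ?prednK //; lia.
Qed.

Lemma reducible_subJ (Q : pred R) : (forall x, Q x -> J x) -> reducible Q.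
Proof.
move=> QJ; exists 0%N => [[|x [|]]] //= _; rewrite andbT big_seq1 => /QJ Jx.
by rewrite -[x]mulr1; apply: ideal_mul_mem Jx _; apply: ideal_exp0.
Qed.

End Reducibility.

Lemma reduction_of_reducible (R : comUnitRingType) (Q : pred R) (J : R -> Prop) :
  (forall x, J x -> ideal_gen (fun y => Q y) x) ->
  reducible (ideal_gen (fun y => Q y)) J Q -> is_reduction J (ideal_gen (fun y => Q y)).
Proof.
move=> J_sub_I [K hK]; split=> //; exists K.+1; split=> // x.
split; last exact: JI_sub_exp.
move=> /ideal_exp_gen_prod; apply: ideal_gen_min; first exact: is_ideal_gen.
move=> _ [s [hs Qs ->]]; apply: (reducing_exponent_leq _ hK) => //.
by move=> y Qy; apply: ideal_gen_mem.
Qed.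

Section ColsubCramer.
Variable R : comUnitRingType.

Lemma colsub_solve (m c : nat) (A : 'M[R]_(m, c)) (f : 'I_m -> 'I_c)
    (X : 'I_c -> R) i0 :
  injective f -> colsub f A \in unitmx ->
  X (f i0) = \sum_t invmx (colsub f A) i0 t * (\sum_k A t k * X k)
     - \sum_(k | k \notin codom f) (invmx (colsub f A) *m A) i0 k * X k.
Proof.
move=> finj Bu; set B := colsub f A; set C := invmx B *m A.
have -> : \sum_t invmx B i0 t * (\sum_k A t k * X k) = \sum_k C i0 k * X k.
  under eq_bigr => t _ do rewrite big_distrr.
  rewrite exchange_big /=; apply: eq_bigr => k _.
  by rewrite /C mxE big_distrl /=; apply: eq_bigr => t _; rewrite mulrA.
have CB i : C i0 (f i) = (invmx B *m B) i0 i.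
  by rewrite !mxE; apply: eq_bigr => t _; rewrite mxE.
rewrite (bigID (fun k => k \in codom f)) /= addrK.
rewrite -big_uniq /=; last by rewrite map_inj_uniq // enum_uniq.
rewrite big_image /= (bigD1 i0) //= big1 ?addr0 => [|i ne].
  by rewrite CB mulVmx // mxE eqxx mul1r.
by rewrite CB mulVmx // mxE eq_sym (negbTE ne) mul0r.
Qed.

Lemma ideal_mem_square_maxminors (m c : nat) (A : 'M[R]_(m, c)) (X : 'I_c -> R)
    (T : R -> Prop) :
  is_ideal T -> m = c -> maxminors_units A ->
  (forall t, T (\sum_k A t k * X k)) -> forall k, T (X k).
Proof.
move=> hT emc hA TX k; pose f := cast_ord emc.
have finj : injective f by apply: cast_ord_inj.
have fu : colsub f A \in unitmx by rewrite unitmxE; apply: hA.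
have -> : k = f (cast_ord (esym emc) k) by apply: ord_inj.
rewrite (colsub_solve _ _ finj fu) [Y in _ - Y]big1 ?subr0 => [|k' /negP[]].
  by apply: ideal_sum => // t _; apply: idealMl.
by apply/codomP; exists (cast_ord (esym emc) k'); apply: ord_inj.
Qed.

End ColsubCramer.

Lemma exists_superset_card (c d : nat) (S : {set 'I_c}) : (#|S| + d <= c)%N ->
  exists T : {set 'I_c}, S \subset T /\ #|T| = (#|S| + d)%N.
Proof.
elim: d S => [|d IH] S h; first by exists S; rewrite addn0.
have /card_gt0P [x] : (0 < #|~: S|)%N by have := cardsC S; rewrite card_ord; lia.
rewrite in_setC => xS.
have [T [sT cT]] := IH (x |: S) ltac:(rewrite cardsU1 xS; lia).
exists T; split; last by rewrite cT cardsU1 xS; lia.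
by apply: subset_trans sT; apply: subsetUr.
Qed.

Lemma sorted_enum_ord_set (c : nat) (T : {set 'I_c}) :
  sorted (fun a b : 'I_c => (a < b)%N) (enum T).
Proof.
have sorted_ord : sorted (fun a b : 'I_c => (a < b)%N) (enum 'I_c).
  by have := iota_ltn_sorted 0 c; rewrite -val_enum_ord sorted_map.
rewrite /enum_mem -enumT.
by apply: sorted_filter sorted_ord => a b d; apply: ltn_trans.
Qed.

Lemma exists_increasing_cover (c m : nat) (j0 : 'I_c) (s : seq 'I_c) :
  (#|s| <= m <= c)%N ->
  exists f : 'I_m -> 'I_c, (forall i i' : 'I_m, (i < i')%N -> (f i < f i')%N) /\
    forall x, x \in s -> x \in codom f.
Proof.
case/andP=> le_s_m le_m_c.
have cs : #|[set x in s]| = #|s| by apply: eq_card => x; rewrite inE.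
have [T [sT cT]] := @exists_superset_card c (m - #|s|) [set x in s]
  ltac:(rewrite cs; lia).
rewrite cs subnKC // in cT.
have sizeT : size (enum T) = m by rewrite -cardE.
exists (fun i => nth j0 (enum T) i); split=> [i i' lt_ii' | x xs].
  apply: (sorted_ltn_nth (leT := fun a b : 'I_c => (a < b)%N)) => //.
  - by move=> a b d; apply: ltn_trans.
  - exact: sorted_enum_ord_set.
  1,2: by rewrite inE sizeT.
have xT : x \in enum T by rewrite mem_enum; apply: (subsetP sT); rewrite inE.
have xm : (index x (enum T) < m)%N by rewrite -sizeT index_mem.
by apply/codomP; exists (Ordinal xm); rewrite /= nth_index.
Qed.

Lemma not_uniq_perm_dup (T : eqType) (s : seq T) : ~~ uniq s ->
  exists j s', perm_eq s (j :: s') /\ j \in s'.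
Proof.
elim: s => [|x s IH] //=; rewrite negb_and negbK => /orP [xs | /IH [j [s' [ps js']]]].
  by exists x, s; rewrite perm_refl.
exists j, (x :: s'); split; last by rewrite inE js' orbT.
apply: (perm_trans (_ : perm_eq _ (x :: j :: s'))); first by rewrite perm_cons.
by rewrite (perm_catCA [:: x] [:: j] s').
Qed.

Lemma all_mem_map_nth (T : eqType) (x0 : T) (X s : seq T) : all (mem X) s ->
  exists js : seq 'I_(size X), s = map (fun j : 'I_(size X) => nth x0 X j) js.
Proof.
elim: s => [|x s IH] /=; first by exists [::].
case/andP => xX /IH [js ->]; have xi : (index x X < size X)%N by rewrite index_mem.
by exists (Ordinal xi :: js); rewrite /= nth_index.
Qed.

Section Level.
Variable R : comUnitRingType.
Variables I J : R -> Prop.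
Hypotheses (J_ideal : is_ideal J) (J_sub_I : forall x, J x -> I x).
Variables (X : seq R) (Q : pred R) (n : nat).
Hypotheses (X_uniq : uniq X) (XI : forall x, x \in X -> I x)
  (QI : forall x, Q x -> I x) (n_ge2 : (2 <= n)%N) (n_le_sizeX : (n <= size X)%N).
Variable A : 'M[R]_(n.-1, size X).
Hypotheses (A_minors : maxminors_units A)
  (J_forms : forall t, J (\sum_(j < size X) A t j * X`_j)).
Hypothesis prod_distinct : forall q : 'I_n -> R, injective q -> (forall i, q i \in X) ->
  exists p b, [/\ Q p, ideal_exp I n.-1 b & \prod_(i < n) q i = p * b].

Local Notation JI := (JI I J).

(* J I^(nk-1) + Q^k I^((n-1)k): every product of k blocks of n elements of X
   lies here. *)
Definition mixed_ideal k := ideal_gen (fun x => JI (n * k).-1 x \/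
  exists s y, [/\ size s = k, all Q s, ideal_exp I (n.-1 * k) y
                & x = \prod_(z <- s) z * y]).

Lemma mixed_sub_exp k x : (0 < k)%N -> mixed_ideal k x -> ideal_exp I (n * k) x.
Proof.
move=> k_gt0; apply: ideal_gen_min; first exact: is_ideal_exp.
move=> z [JIz | [s [y [hs Qs hy ->]]]].
  by rewrite (_ : n * k = (n * k).-1.+1)%N; [apply: JI_sub_exp JIz | nia].
rewrite (_ : n * k = size s + n.-1 * k)%N; last by rewrite hs; nia.
by apply: ideal_expD hy; apply: ideal_exp_prod => w /(allP Qs) /QI.
Qed.

Lemma JI_mul_mixed a b x y : (0 < a)%N -> (0 < b)%N ->
  JI (n * a).-1 x -> mixed_ideal b y -> JI (n * (a + b)).-1 (x * y).
Proof.
move=> a_gt0 b_gt0 JIx /(mixed_sub_exp b_gt0) hy.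
by rewrite (_ : (n * (a + b)).-1 = (n * a).-1 + n * b)%N; [apply: JI_mul_exp | nia].
Qed.

Lemma mixed_mul a b x y : (0 < a)%N -> (0 < b)%N ->
  mixed_ideal a x -> mixed_ideal b y -> mixed_ideal (a + b) (x * y).
Proof.
move=> a_gt0 b_gt0 hx hy; apply: (ideal_gen_mul hx hy) => x' y' hx' hy'.
case: hx' => [JIx | [s [u [hs Qs hu ->]]]].
  by apply: ideal_gen_mem; left; apply: JI_mul_mixed JIx (ideal_gen_mem hy').
case: hy' => [JIy | [t [v [ht Qt hv ->]]]].
  apply: ideal_gen_mem; left; rewrite mulrC addnC; apply: JI_mul_mixed JIy _ => //.
  by apply: ideal_gen_mem; right; exists s, u.
apply: ideal_gen_mem; right; exists (s ++ t), (u * v); split.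
- by rewrite size_cat hs ht.
- by rewrite all_cat Qs Qt.
- by rewrite mulnDr; apply: ideal_expD.
- by rewrite big_cat /= mulrACA.
Qed.

Lemma prod_nth_exp (s : seq 'I_(size X)) :
  ideal_exp I (size s) (\prod_(i <- s) X`_i).
Proof.
have -> : \prod_(i <- s) X`_i = \prod_(x <- [seq X`_i | i : 'I_(size X) <- s]) x.
  by rewrite big_map.
rewrite -(size_map (fun i : 'I_(size X) => X`_i)).
by apply: ideal_exp_prod => _ /mapP [i _ ->]; apply: XI; apply: mem_nth.
Qed.

Lemma prod_uniq_mixed1 (js : seq 'I_(size X)) : size js = n -> uniq js ->
  mixed_ideal 1 (\prod_(j <- js) X`_j).
Proof.
move=> hs js_uniq; have sizeX_gt0 : (0 < size X)%N by lia.
pose j0 := Ordinal sizeX_gt0; pose q (i : 'I_n) := X`_(nth j0 js i).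
have q_inj : injective q.
  move=> i i' /eqP; rewrite /q nth_uniq // => /eqP /ord_inj /eqP.
  by rewrite nth_uniq ?hs // => /eqP /ord_inj.
have [p [b [Qp hb]]] := prod_distinct q_inj (fun i => mem_nth 0 (ltn_ord _)).
rewrite (big_nth j0) hs big_mkord => ->.
by apply: ideal_gen_mem; right; exists [:: p], b; rewrite big_seq1 muln1 /= Qp.
Qed.

(* Cramer's rule on n - 1 columns of A that cover s expresses X_j through the
   generators of J and the X_k with k outside s. *)
Lemma mixed1_dup j (s : seq 'I_(size X)) : size s = n.-1 -> j \in s ->
  (forall k, k \notin s -> mixed_ideal 1 (X`_k * \prod_(i <- s) X`_i)) ->
  mixed_ideal 1 (X`_j * \prod_(i <- s) X`_i).
Proof.
move=> hs js mixed_new; have sizeX_gt0 : (0 < size X)%N by lia.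
have card_s : (#|s| <= n.-1 <= size X)%N.
  by rewrite (leq_trans (card_size s)) ?hs //=; lia.
have [f [f_incr s_f]] := exists_increasing_cover (Ordinal sizeX_gt0) card_s.
have f_inj : injective f.
  by move=> i i' efi; apply: ord_inj; case: (ltngtP i i') => // /f_incr; rewrite efi ltnn.
have fA_unit : colsub f A \in unitmx by rewrite unitmxE; apply: A_minors.
have /codomP [i0 ->] := s_f j js.
rewrite (colsub_solve (fun k => X`_k) i0 f_inj fA_unit) mulrBl.
apply: idealB; first exact: is_ideal_gen.
  apply: ideal_gen_mem; left; apply: ideal_mul_mem.
    by apply: ideal_sum => // t _; apply: idealMl.
  by rewrite muln1 -hs; apply: prod_nth_exp.
rewrite big_distrl /=; apply: ideal_sum; first exact: is_ideal_gen.
move=> k kf; rewrite -mulrA; apply: idealMl; first exact: is_ideal_gen.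
by apply: mixed_new; apply: contra kf; apply: s_f.
Qed.

Lemma prod_nth_mixed1 (js : seq 'I_(size X)) : size js = n ->
  mixed_ideal 1 (\prod_(j <- js) X`_j).
Proof.
move=> hs; have [u] : exists u, (n <= #|js| + u)%N by exists n; lia.
elim: u js hs => [|u IH] js hs hu.
  apply: prod_uniq_mixed1 => //; apply/card_uniqP/eqP.
  by rewrite eqn_leq card_size hs -(addn0 #|js|).
have [js_uniq | /not_uniq_perm_dup [j [s [pjs js_dup]]]] := boolP (uniq js).
  exact: prod_uniq_mixed1.
have hs' : size s = n.-1 by have := perm_size pjs; rewrite hs /=; lia.
have mem_s x : (x \in s) = (x \in js).
  by rewrite (perm_mem pjs) inE; case: eqVneq => // ->; rewrite js_dup.
rewrite (perm_big _ pjs) big_cons; apply: mixed1_dup => // k ks.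
have -> : X`_k * \prod_(i <- s) X`_i = \prod_(i <- k :: s) X`_i by rewrite big_cons.
apply: IH; first by rewrite /= hs'; lia.
by rewrite cardU1 ks (eq_card mem_s) add1n addSnnS.
Qed.

Lemma prod_mixed1 s : size s = n -> all (mem X) s -> mixed_ideal 1 (\prod_(x <- s) x).
Proof.
move=> + Xs; have [js ->] := all_mem_map_nth 0 Xs.
by rewrite big_map size_map; apply: prod_nth_mixed1.
Qed.

Lemma prod_mixed k s : size s = (n * k.+1)%N -> all (mem X) s ->
  mixed_ideal k.+1 (\prod_(x <- s) x).
Proof.
elim: k s => [|k IH] s hs Xs; first by apply: prod_mixed1; rewrite // hs muln1.
have /andP [Xs1 Xs2] : all (mem X) (take n s) && all (mem X) (drop n s).
  by rewrite -all_cat cat_take_drop.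
rewrite -(cat_take_drop n s) big_cat -add1n; apply: mixed_mul => //.
  by apply: prod_mixed1 Xs1; rewrite size_takel // hs; nia.
by apply: IH Xs2; rewrite size_drop hs; nia.
Qed.

Lemma level_reducible : reducible I J Q -> reducible I J (mem X).
Proof.
move=> [K hK]; exists (n * K.+1).-1 => s hs Xs.
have hs' : size s = (n * K.+1)%N by rewrite hs prednK // muln_gt0; lia.
have := prod_mixed hs' Xs.
apply: ideal_gen_min; first exact: is_ideal_gen.
move=> _ [// | [t [y [ht Qt hy ->]]]].
rewrite (_ : (n * K.+1).-1 = K + n.-1 * K.+1)%N; last by nia.
by apply: JI_mul_exp hy; apply: hK.
Qed.

End Level.

Section Filtration.
Variable R : comUnitRingType.
Variables I J : R -> Prop.
Hypotheses (J_ideal : is_ideal J) (J_sub_I : forall x, J x -> I x).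
Variables (r : nat) (Pl : 'I_r.+1 -> seq R) (n : 'I_r.+1 -> nat).
Variable A : forall l : 'I_r.+1, 'M[R]_((n l).-1, size (Pl l)).
Hypotheses (Pl_uniq : forall l, uniq (Pl l)) (PlI : forall l x, x \in Pl l -> I x)
  (size_Pl0 : size (Pl ord0) = 1%N)
  (n_single : forall l, size (Pl l) = 1%N -> n l = 2%N)
  (A_minors : forall l, maxminors_units (A l))
  (J_forms : forall l i, J (\sum_(j < size (Pl l)) A l i j * (Pl l)`_j)).
Hypothesis prod_distinct : forall l : 'I_r.+1, (0 < l)%N -> (2 <= size (Pl l))%N ->
  [/\ (2 <= n l)%N, (n l <= size (Pl l))%N &
   forall q : 'I_(n l) -> R, injective q -> (forall i, q i \in Pl l) ->
     exists (l' : 'I_r.+1) (p b : R),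
       [/\ (l' < l)%N, p \in Pl l', ideal_exp I (n l).-1 b
         & \prod_(i < n l) q i = p * b]].

Definition lower_levels (k : nat) : pred R :=
  fun x => [exists l : 'I_r.+1, (l < k)%N && (x \in Pl l)].

Lemma lower_levelsI k x : lower_levels k x -> I x.
Proof. by case/existsP=> l /andP [_]; apply: PlI. Qed.

Lemma level_reducible_step (l : 'I_r.+1) :
  reducible I J (lower_levels l) -> reducible I J (mem (Pl l)).
Proof.
move=> red_lower; case: (ltngtP (size (Pl l)) 1) => [size0 | size_ge2 | size1].
- by apply: reducible_subJ => x; case: (Pl l) size0.
- have l_gt0 : (0 < l)%N.
    case: (posnP l) => // l0; move: size_ge2.
    by rewrite (_ : l = ord0) ?size_Pl0 //; apply: ord_inj.
  have [n_ge2 n_le prod_l] := prod_distinct l_gt0 size_ge2.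
  apply: (level_reducible J_ideal J_sub_I (Pl_uniq l) (@PlI l) (@lower_levelsI l)
    n_ge2 n_le (@A_minors l) (@J_forms l)) => // q q_inj qPl.
  have [l' [p [b [lt_l'l pl' hb ->]]]] := prod_l q q_inj qPl.
  by exists p, b; split=> //; apply/existsP; exists l'; rewrite lt_l'l.
- apply: reducible_subJ => x xl; rewrite -(nth_index 0 xl).
  have xi : (index x (Pl l) < size (Pl l))%N by rewrite index_mem.
  apply: (ideal_mem_square_maxminors (X := fun j => (Pl l)`_j) J_ideal _ (@A_minors l)
    (@J_forms l) (Ordinal xi)).
  by rewrite n_single.
Qed.

Lemma lower_levels_reducible k : (k <= r.+1)%N -> reducible I J (lower_levels k).
Proof.
elim: k => [_ | k IH lt_k]; first by apply: reducible_subJ => x /existsP [l].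
pose l := Ordinal lt_k; have red_l : reducible I J (lower_levels l) by apply: IH; lia.
apply: reducible_sub (reducibleU (@lower_levelsI l) (@PlI l) red_l
  (level_reducible_step red_l)).
move=> x /existsP [l' /andP [lt_l'k xl']]; case: (ltngtP l' k) => [lt_l'l | | eq_l'l].
- by apply/orP; left; apply/existsP; exists l'; rewrite lt_l'l.
- lia.
- by apply/orP; right; rewrite (_ : l = l') //; apply: ord_inj.
Qed.

End Filtration.

Unset Implicit Arguments. Set Strict Implicit.

Theorem theorem2p5 (R : comUnitRingType)
  (HnoethR : noetherian R) (HlocR : local_ring R)
  (r : nat) (P : seq R) (Pl : 'I_r.+1 -> seq R)
  (HPuniq : uniq P) (HPluniq : forall l, uniq (Pl l))
  (HPlsub : forall l x, x \in Pl l -> x \in P)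
  (* (Ba1) *)
  (HBa1 : forall x, x \in P -> exists l, x \in Pl l)
  (* (Ba2) *)
  (HBa2 : size (Pl ord0) = 1%N)
  (n : 'I_r.+1 -> nat)
  (Hn1 : forall l, size (Pl l) = 1%N -> n l = 2%N)
  (* (Ba3) *)
  (HBa3 : forall l : 'I_r.+1, (0 < l)%N -> (2 <= size (Pl l))%N ->
     [/\ (2 <= n l)%N, (n l <= size (Pl l))%N &
      forall q : 'I_(n l) -> R, injective q -> (forall i, q i \in Pl l) ->
        exists (l' : 'I_r.+1) (p' b : R),
          [/\ (l' < l)%N, p' \in Pl l',
              ideal_exp (ideal_gen (fun y => y \in P)) (n l).-1 b &
              \prod_(i < n l) q i = p' * b]])
  (A : forall l : 'I_r.+1, 'M[R]_((n l).-1, size (Pl l)))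
  (HA : forall l, maxminors_units (A l)) :
  let I := ideal_gen (fun y => y \in P) in
  let g := fun (l : 'I_r.+1) (i : 'I_(n l).-1) =>
             \sum_(j < size (Pl l)) A l i j * (Pl l)`_j in
  let J := ideal_gen (fun x => exists (l : 'I_r.+1) (i : 'I_(n l).-1), x = g l i) in
  is_reduction J I.
Proof.
move=> I g J.
have J_ideal : is_ideal J by apply: is_ideal_gen.
have PlI l x : x \in Pl l -> I x.
  by move=> /HPlsub; apply: (ideal_gen_mem (S := fun y => y \in P)).
have J_forms l i : J (g l i) by rewrite /J; apply: ideal_gen_mem; exists l, i.
have J_sub_I x : J x -> I x.
  apply: ideal_gen_min => [|_ [l [i ->]]]; first exact: is_ideal_gen.
  apply: ideal_sum => [|j _]; first exact: is_ideal_gen.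
  by apply: idealMl; [apply: is_ideal_gen | apply: PlI (mem_nth 0 (ltn_ord j))].
apply: reduction_of_reducible => //.
apply: reducible_sub (lower_levels_reducible J_ideal J_sub_I HPluniq PlI HBa2 Hn1 HA
  J_forms HBa3 (leqnn r.+1)).
by move=> x /HBa1 [l xl]; apply/existsP; exists l; rewrite ltn_ord.
Qed.
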